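(* Let $m,\ell\geq 2$ and let $n\ge 1$ be divisible by $\ell$. Then \[a_{2(\ell)}(n)=b_\ell(2n,n),\] and more generally \[a_{m(\ell)}(n)=a_{(m-1)(\ell)}(2n,n).\]
   Context: An $\ell$-regular partition is a partition with no part divisible by $\ell$. $a_{m(\ell)}(n)$ is the number of $\ell$-regular partitions of $n$ in which the smallest part occurs at least $m$ times. $a_{m(\ell)}(N,k)$ is the number of $\ell$-regular partitions of $N$ in which the smallest part occurs at least $m$ times and the largest part minus the smallest part equals $k$. $b_\ell(N,k)$ is the number of $\ell$-regular partitions of $N$ in which the largest part minus the smallest part equals $k$. *)

From mathcomp Require Import all_boot.
Set Implicit Arguments. Unset Strict Implicit. Unset Printing Implicit Defensive.

(* A partition of N is encoded by its multiplicity function: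
   f i = number of parts equal to i (for 0 <= i <= N); f 0 = 0 and
   \sum_i i * f i = N.  This is a bijective encoding of partitions of N. *)
Definition mfun (N : nat) := {ffun 'I_N.+1 -> 'I_N.+1}.

Definition is_partition (N : nat) (f : mfun N) : bool :=
  (f ord0 == 0 :> nat) && (\sum_(i < N.+1) i * f i == N).

Definition is_part (N : nat) (f : mfun N) (i : 'I_N.+1) : bool := 0 < f i.

Definition l_regular (l N : nat) (f : mfun N) : bool :=
  [forall i, is_part f i ==> ~~ (l %| i)].

Definition is_smallest_part (N : nat) (f : mfun N) (i : 'I_N.+1) : bool :=
  is_part f i && [forall j, is_part f j ==> (i <= j)].

Definition is_largest_part (N : nat) (f : mfun N) (i : 'I_N.+1) : bool :=
  is_part f i && [forall j, is_part f j ==> (j <= i)].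

Definition smallest_at_least (m N : nat) (f : mfun N) : bool :=
  [exists i, is_smallest_part f i && (m <= f i)].

Definition spread_eq (k N : nat) (f : mfun N) : bool :=
  [exists i, exists j, [&& is_smallest_part f i, is_largest_part f j
                         & (j - i == k)]].

Definition a_ml (m l n : nat) : nat :=
  #|[set f : mfun n | [&& is_partition f, l_regular l f & smallest_at_least m f]]|.

Definition a_mlk (m l N k : nat) : nat :=
  #|[set f : mfun N | [&& is_partition f, l_regular l f,
                          smallest_at_least m f & spread_eq k f]]|.

Definition b_lk (l N k : nat) : nat :=
  #|[set f : mfun N | [&& is_partition f, l_regular l f & spread_eq k f]]|.

From mathcomp Require Import all_boot zify.
Set Implicit Arguments. Unset Strict Implicit. Unset Printing Implicit Defensive.

(* Removing one copy of the smallest part s of a partition of n and adding the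
   new part n + s gives a partition of 2n whose largest and smallest parts
   differ by n; as l %| n, the new part is l-regular exactly when s is.
   Conversely, in a partition of 2n with smallest part s and largest part
   n + s, the largest part occurs once and every other part is at most n - s,
   so the move can be undone.  The first identity is the case m = 2: a
   partition with spread n has a smallest part, occurring at least once. *)

Implicit Types (F G H : nat -> nat) (a b c i j s K N : nat).

Definition weight K (F : nat -> nat) : nat := \sum_(i < K) i * F i.

Lemma weight_widen K1 K2 F : K1 <= K2 -> (forall i, K1 <= i -> F i = 0) ->
  weight K2 F = weight K1 F.
Proof.
move=> leK F0; rewrite /weight -!(big_mkord xpredT (fun i => i * F i)).
rewrite (big_cat_nat (leq0n K1) leK) /= [X in _ + X]big_nat_cond [X in _ + X]big1 ?addn0 //.
by move=> i /andP[/andP[/F0 -> _] _]; rewrite muln0.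
Qed.

Lemma weightD K F G : weight K (fun i => F i + G i) = weight K F + weight K G.
Proof. by rewrite /weight -big_split; apply: eq_bigr => i _; rewrite mulnDr. Qed.

Lemma weight_indicator K c : c < K -> weight K (fun i => nat_of_bool (i == c)) = c.
Proof.
move=> ltcK; rewrite /weight (bigD1 (Ordinal ltcK)) //= eqxx muln1 big1 ?addn0 //.
by move=> i /eqP neq_ic; case: eqP => [eq_ic|]; [case: neq_ic; apply: val_inj|rewrite muln0].
Qed.

Lemma leq_weight K a F : a < K -> a * F a <= weight K F.
Proof. by move=> ltaK; rewrite /weight (bigD1 (Ordinal ltaK)) //= leq_addr. Qed.

Lemma leq_weight2 K a b F : a < K -> b < K -> a != b ->
  a * F a + b * F b <= weight K F.
Proof.
move=> ltaK ltbK neq_ab; rewrite /weight (bigD1 (Ordinal ltaK)) //=.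
rewrite (bigD1 (Ordinal ltbK)) /= ?addnA ?leq_addr //.
by apply: contra neq_ab => /eqP [->].
Qed.

Definition partition_fn N (F : nat -> nat) : Prop :=
  [/\ F 0 = 0, forall i, N < i -> F i = 0 & weight N.+1 F = N].

Lemma partition_fn_le N F : partition_fn N F -> forall i, F i <= N.
Proof.
case=> F0 Fout wF i; case: (ltnP N i) => [/Fout -> //|leiN].
case: (posnP i) => [-> | i_gt0]; first by rewrite F0.
have := @leq_weight N.+1 i F; rewrite wF ltnS => /(_ leiN); nia.
Qed.

Lemma partition_fn_support N F j : partition_fn N F -> 0 < F j -> j <= N.
Proof. by case=> _ Fout _; apply: contraTT; rewrite -ltnNge => /Fout ->. Qed.

Lemma eq_partition_fn N F G : F =1 G -> partition_fn N F -> partition_fn N G.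
Proof.
move=> eqFG [F0 Fout wF]; split=> [|i /Fout|]; rewrite -?eqFG //.
by rewrite -[RHS]wF; apply: eq_bigr => i _; rewrite eqFG.
Qed.

Definition least_part (F : nat -> nat) s := 0 < F s /\ forall j, 0 < F j -> s <= j.
Definition greatest_part (F : nat -> nat) L := 0 < F L /\ forall j, 0 < F j -> j <= L.
Definition regular l (F : nat -> nat) := forall i, 0 < F i -> ~~ (l %| i).

Lemma least_part_uniq F s s' : least_part F s -> least_part F s' -> s = s'.
Proof. by move=> [Fs les] [Fs' les']; apply/eqP; rewrite eqn_leq les ?les'. Qed.

Lemma eq_least_part F G s : F =1 G -> least_part F s -> least_part G s.
Proof. by move=> eqFG [Fs Fmin]; split=> [|j]; rewrite -!eqFG //; apply: Fmin. Qed.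

Lemma eq_greatest_part F G L : F =1 G -> greatest_part F L -> greatest_part G L.
Proof. by move=> eqFG [FL Fmax]; split=> [|j]; rewrite -!eqFG //; apply: Fmax. Qed.

Lemma eq_regular l F G : F =1 G -> regular l F -> regular l G.
Proof. by move=> eqFG regF j; rewrite -eqFG; apply: regF. Qed.

Lemma partition_fn_least_gt0 N F s : partition_fn N F -> least_part F s -> 0 < s.
Proof. by case=> F0 _ _ [Fs _]; case: (posnP s) Fs => // ->; rewrite F0. Qed.

Definition move_part a b (F : nat -> nat) (j : nat) : nat :=
  F j - (j == a) + (j == b).

Lemma eq_move_part a b F G : F =1 G -> move_part a b F =1 move_part a b G.
Proof. by move=> eqFG j; rewrite /move_part eqFG. Qed.

Lemma move_partK a b F : 0 < F a -> move_part b a (move_part a b F) =1 F.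
Proof.
by move=> Fa j; rewrite /move_part addnK; case: eqP => [->|_]; rewrite ?subnK ?subn0 ?addn0.
Qed.

Lemma move_part_gt0 a b F j : 0 < move_part a b F j -> 0 < F j \/ j = b.
Proof.
rewrite /move_part; case: (eqVneq j b) => [-> | _]; first by right.
by rewrite addn0 => pos; left; exact: leq_trans pos (leq_subr _ _).
Qed.

Lemma weight_move_part K a b F : a < K -> b < K -> 0 < F a ->
  weight K (move_part a b F) + a = weight K F + b.
Proof.
move=> ltaK ltbK Fa.
have -> : weight K F = weight K (fun i => F i - (i == a) + (i == a)).
  by apply: eq_bigr => i _; case: eqP => [->|_]; rewrite ?subnK ?subn0 ?addn0.
by rewrite /move_part !weightD !weight_indicator // addnAC.
Qed.

Lemma regular_move_part l a b F : (l %| a) = (l %| b) -> 0 < F a ->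
  regular l F -> regular l (move_part a b F).
Proof.
move=> dv_ab Fa regF j /move_part_gt0 [/regF //| ->].
by rewrite -dv_ab; exact: regF.
Qed.

Section Shift.

Variable n : nat.
Hypothesis n_gt0 : 0 < n.

Lemma shift_up_spec G s : partition_fn n G -> least_part G s -> 1 < G s ->
  [/\ partition_fn (2 * n) (move_part s (n + s) G),
      least_part (move_part s (n + s) G) s,
      greatest_part (move_part s (n + s) G) (n + s)
    & move_part s (n + s) G s = (G s).-1].
Proof.
move=> partG leastG Gs_gt1; have s_gt0 := partition_fn_least_gt0 partG leastG.
case: (partG) leastG => G0 Gout wG [Gs_gt0 Gmin].
have les_n : s <= n := partition_fn_support partG Gs_gt0.
have s_neq : (s == n + s) = false by apply/eqP; lia.
have Hs : move_part s (n + s) G s = (G s).-1 by rewrite /move_part eqxx s_neq; lia.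
have wGn : weight (2 * n).+1 G = n by rewrite (weight_widen (K1 := n.+1)) //; lia.
split=> //.
- split.
  + by rewrite /move_part G0 sub0n; case: eqP => //; lia.
  + by move=> i lt_i; rewrite /move_part Gout ?sub0n; [case: eqP => //; lia | lia].
  have := @weight_move_part (2 * n).+1 s (n + s) G; rewrite wGn; lia.
- by split=> [|j /move_part_gt0 [/Gmin //| ->]]; lia.
split=> [|j /move_part_gt0 [/(partition_fn_support partG)| ->]] //; last lia.
by rewrite /move_part Gout ?eqxx //; lia.
Qed.

Lemma shift_down_spec H s :
  partition_fn (2 * n) H -> least_part H s -> greatest_part H (n + s) ->
  [/\ partition_fn n (move_part (n + s) s H),
      least_part (move_part (n + s) s H) s
    & move_part (n + s) s H s = (H s).+1].
Proof.
move=> partH leastH [Hns_gt0 Hmax]; have s_gt0 := partition_fn_least_gt0 partH leastH.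
case: (partH) leastH => H0 Hout wH [Hs_gt0 Hmin].
have s_neq : (s == n + s) = false by apply/eqP; lia.
have ns_le : n + s < (2 * n).+1 by rewrite ltnS (partition_fn_support partH Hns_gt0).
have Hns : H (n + s) = 1.
  have := @leq_weight2 (2 * n).+1 (n + s) s H ns_le; rewrite wH; nia.
have Hsmall j : j != n + s -> 0 < H j -> j + (n + s) <= 2 * n.
  move=> j_neq Hj; have j_le := partition_fn_support partH Hj.
  have := @leq_weight2 (2 * n).+1 j (n + s) H; rewrite wH; nia.
have les_n : s <= n by have := Hsmall s; rewrite s_neq => /(_ isT Hs_gt0); lia.
have Gout i : n < i -> move_part (n + s) s H i = 0.
  rewrite /move_part; case: (eqVneq i (n + s)) => [-> _ | i_neq lt_ni].
    by rewrite Hns eq_sym s_neq.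
  have Hi : H i = 0 by case: (posnP (H i)) => // /(Hsmall _ i_neq); lia.
  by rewrite Hi sub0n; case: eqP => //; lia.
split.
- split=> //; first by rewrite /move_part H0 sub0n; case: eqP => //; lia.
  have := @weight_move_part (2 * n).+1 (n + s) s H ns_le; rewrite wH.
  rewrite (weight_widen (K1 := n.+1)) //; lia.
- split=> [|j /move_part_gt0 [/Hmin //| ->]] //.
  by rewrite /move_part eqxx s_neq; lia.
by rewrite /move_part eqxx s_neq; lia.
Qed.

End Shift.

Definition mult N (f : mfun N) i : nat := if i < N.+1 then nat_of_ord (f (inord i)) else 0.

Lemma mult_ord N (f : mfun N) (i : 'I_N.+1) : mult f i = f i.
Proof. by rewrite /mult ltn_ord inord_val. Qed.

Lemma mult_gt0_le N (f : mfun N) j : 0 < mult f j -> j < N.+1.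
Proof. by rewrite /mult; case: ifP. Qed.

Lemma mult_inj N (f g : mfun N) : mult f =1 mult g -> f = g.
Proof. by move=> eq_fg; apply/ffunP => i; apply/val_inj; rewrite /= -!mult_ord. Qed.

Definition mfun_of N F : mfun N := [ffun j : 'I_N.+1 => inord (F j)].

Lemma mult_mfun_of N F : partition_fn N F -> mult (mfun_of N F) =1 F.
Proof.
move=> partF i; rewrite /mult; case: ltnP => [lt_iN | lt_Ni]; last by case: partF => _ ->.
by rewrite ffunE (inordK lt_iN) inordK // ltnS partition_fn_le.
Qed.

Lemma is_partitionP N (f : mfun N) : reflect (partition_fn N (mult f)) (is_partition f).
Proof.
rewrite /is_partition -(mult_ord f ord0).
have -> : \sum_(i < N.+1) i * f i = weight N.+1 (mult f).
  by apply: eq_bigr => i _; rewrite mult_ord.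
apply: (iffP andP) => [[/eqP f0 /eqP wf] | [-> _ ->]] //; split=> // i.
by move=> lt_Ni; rewrite /mult ltnNge lt_Ni.
Qed.

Lemma forall_partP N (f : mfun N) (P : nat -> bool) :
  reflect (forall j, 0 < mult f j -> P j) [forall j, is_part f j ==> P j].
Proof.
apply: (iffP forallP) => [Pf j fj | Pf j]; last by rewrite /is_part -mult_ord; apply/implyP/Pf.
by have := Pf (Ordinal (mult_gt0_le fj)); rewrite /is_part -mult_ord fj.
Qed.

Lemma l_regularP l N (f : mfun N) : reflect (regular l (mult f)) (l_regular l f).
Proof. exact: forall_partP. Qed.

Lemma is_smallest_partP N (f : mfun N) (i : 'I_N.+1) :
  reflect (least_part (mult f) i) (is_smallest_part f i).
Proof.
rewrite /is_smallest_part {1}/is_part -mult_ord.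
by apply: (iffP andP) => -[fi /(forall_partP _ (leq i))]; split.
Qed.

Lemma is_largest_partP N (f : mfun N) (i : 'I_N.+1) :
  reflect (greatest_part (mult f) i) (is_largest_part f i).
Proof.
rewrite /is_largest_part {1}/is_part -mult_ord.
by apply: (iffP andP) => -[fi /(forall_partP _ (leq^~ i))]; split.
Qed.

Lemma smallest_at_leastP m N (f : mfun N) :
  reflect (exists2 s, least_part (mult f) s & m <= mult f s) (smallest_at_least m f).
Proof.
apply: (iffP existsP) => [[i /andP[/is_smallest_partP leastf]]|[s leastf le_m]].
  by rewrite -mult_ord; exists i.
exists (Ordinal (mult_gt0_le leastf.1)).
by rewrite -mult_ord le_m andbT; apply/is_smallest_partP.
Qed.

Lemma spread_eqP k N (f : mfun N) :
  reflect (exists s L, [/\ least_part (mult f) s, greatest_part (mult f) L & L - s = k])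
    (spread_eq k f).
Proof.
apply: (iffP existsP) => [[i /existsP[j /and3P[/is_smallest_partP ? /is_largest_partP ? /eqP]]]|].
  by exists i, j.
case=> s [L [leastf greatestf eq_k]]; exists (Ordinal (mult_gt0_le leastf.1)).
apply/existsP; exists (Ordinal (mult_gt0_le greatestf.1)).
by apply/and3P; split; [apply/is_smallest_partP | apply/is_largest_partP | apply/eqP].
Qed.

Definition min_part N (f : mfun N) : nat :=
  if [pick i | is_smallest_part f i] is Some i then val i else 0.

Lemma min_partE N (f : mfun N) s : least_part (mult f) s -> min_part f = s.
Proof.
move=> leastf; rewrite /min_part; case: pickP => [i /is_smallest_partP leasti|none].
  exact: least_part_uniq leasti leastf.
by have /negP[] := none (Ordinal (mult_gt0_le leastf.1)); apply/is_smallest_partP.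
Qed.

Lemma mfun_of_eq N (f : mfun N) G : is_partition f -> G =1 mult f -> mfun_of N G = f.
Proof.
move=> /is_partitionP partf eqG; apply: mult_inj => i.
by rewrite mult_mfun_of ?eqG //; exact: eq_partition_fn (fsym eqG) partf.
Qed.

Lemma card_in_bij (T U : finType) (A : {set T}) (B : {set U}) (f : T -> U) (g : U -> T) :
  {in A, forall x, f x \in B} -> {in B, forall y, g y \in A} ->
  {in A, cancel f g} -> {in B, cancel g f} -> #|A| = #|B|.
Proof.
move=> fAB gBA fK gK; rewrite -(card_in_imset (can_in_inj fK)).
suff -> : f @: A = B by [].
apply/eqP; rewrite eqEsubset; apply/andP; split; apply/subsetP => y.
  by case/imsetP => x Ax ->; exact: fAB.
by move=> By; rewrite -(gK y By) imset_f ?gBA.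
Qed.

Section Bijection.

Variables m l n : nat.
Hypotheses (m_gt1 : 1 < m) (n_gt0 : 0 < n) (l_dvd_n : l %| n).

Local Notation A :=
  [set f : mfun n | [&& is_partition f, l_regular l f & smallest_at_least m f]].
Local Notation B :=
  [set h : mfun (2 * n) | [&& is_partition h, l_regular l h,
                             smallest_at_least (m - 1) h & spread_eq n h]].

Definition shift_up (f : mfun n) : mfun (2 * n) :=
  mfun_of (2 * n) (move_part (min_part f) (n + min_part f) (mult f)).

Definition shift_down (h : mfun (2 * n)) : mfun n :=
  mfun_of n (move_part (n + min_part h) (min_part h) (mult h)).

Lemma shift_up_props f : f \in A ->
  [/\ shift_up f \in B, min_part (shift_up f) = min_part f
    & mult (shift_up f) =1 move_part (min_part f) (n + min_part f) (mult f)].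
Proof.
rewrite inE => /and3P[/is_partitionP partf /l_regularP regf].
case/smallest_at_leastP=> s leastf le_m; rewrite /shift_up (min_partE leastf).
have [partG leastG greatestG Gs] := shift_up_spec n_gt0 partf leastf (leq_trans m_gt1 le_m).
have multG := mult_mfun_of partG; have multG' := fsym multG.
split=> //; last exact/min_partE/(eq_least_part multG').
rewrite inE; apply/and4P; split.
- by apply/is_partitionP; exact: eq_partition_fn multG' partG.
- apply/l_regularP; apply: eq_regular multG' _.
  by apply: regular_move_part regf; [rewrite dvdn_addr | case: leastf].
- apply/smallest_at_leastP; exists s; first exact: eq_least_part multG' leastG.
  by rewrite multG Gs; lia.
apply/spread_eqP; exists s, (n + s); split; last by rewrite addnK.
  exact: eq_least_part multG' leastG.
exact: eq_greatest_part multG' greatestG.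
Qed.

Lemma shift_down_props h : h \in B ->
  [/\ shift_down h \in A, min_part (shift_down h) = min_part h
    & mult (shift_down h) =1 move_part (n + min_part h) (min_part h) (mult h)].
Proof.
rewrite inE => /and4P[/is_partitionP parth /l_regularP regh].
case/smallest_at_leastP=> s leasth le_m /spread_eqP[s' [L [leasth' greatesth eq_n]]].
have eq_s := least_part_uniq leasth' leasth; subst s'.
have eq_L : L = n + s by have := leasth.2 L greatesth.1; lia.
subst L; rewrite /shift_down (min_partE leasth).
have [partG leastG Gs] := shift_down_spec n_gt0 parth leasth greatesth.
have multG := mult_mfun_of partG; have multG' := fsym multG.
split=> //; last exact/min_partE/(eq_least_part multG').
rewrite inE; apply/and3P; split.
- by apply/is_partitionP; exact: eq_partition_fn multG' partG.
- apply/l_regularP; apply: eq_regular multG' _.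
  by apply: regular_move_part regh; [rewrite dvdn_addr | case: greatesth].
apply/smallest_at_leastP; exists s; first exact: eq_least_part multG' leastG.
by rewrite multG Gs; lia.
Qed.

Lemma shift_upK : {in A, cancel shift_up shift_down}.
Proof.
move=> f fA; have [_ min_up mult_up] := shift_up_props fA.
move: fA; rewrite inE => /and3P[partf _ /smallest_at_leastP[s leastf _]].
rewrite /shift_down min_up; apply: mfun_of_eq partf _.
apply: ftrans (eq_move_part _ _ mult_up) _; apply: move_partK.
by rewrite (min_partE leastf); case: leastf.
Qed.

Lemma shift_downK : {in B, cancel shift_down shift_up}.
Proof.
move=> h hB; have [_ min_down mult_down] := shift_down_props hB.
move: hB; rewrite inE => /and4P[parth _ _ /spread_eqP[s [L [leasth greatesth eq_n]]]].
rewrite /shift_up min_down; apply: mfun_of_eq parth _.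
apply: ftrans (eq_move_part _ _ mult_down) _; apply: move_partK.
have le_sL := leasth.2 L greatesth.1.
have -> : n + min_part h = L by rewrite (min_partE leasth); lia.
by case: greatesth.
Qed.

Lemma a_ml_shift : a_ml m l n = a_mlk (m - 1) l (2 * n) n.
Proof.
apply: (card_in_bij (f := shift_up) (g := shift_down)) shift_upK shift_downK.
- by move=> f /shift_up_props[].
- by move=> h /shift_down_props[].
Qed.

End Bijection.

Lemma spread_eq_smallest_at_least1 k N (f : mfun N) :
  spread_eq k f -> smallest_at_least 1 f.
Proof.
by case/spread_eqP=> s [L [leastf _ _]]; apply/smallest_at_leastP; exists s; case: leastf.
Qed.

Theorem theorem5p5 (m l n : nat) :
  2 <= m -> 2 <= l -> 1 <= n -> l %| n ->
  a_ml 2 l n = b_lk l (2 * n) n /\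
  a_ml m l n = a_mlk (m - 1) l (2 * n) n.
Proof.
move=> m_gt1 _ n_gt0 l_dvd_n; split; last exact: a_ml_shift.
rewrite a_ml_shift //; apply: eq_card => f; rewrite !inE.
by case: (boolP (spread_eq n f)) => [/spread_eq_smallest_at_least1 -> | _]; rewrite ?andbF.
Qed.
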